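(* Let $X$ be the class of continuous functions $f:[0,1]\to\mathbb{R}$ with $f(0),f(1)\in\mathbb{Z}$. Then each of the two families of operators $\widetilde{B}_n$, $n\in\mathbb{N}_+$, and $\widehat{B}_n$, $n\in\mathbb{N}_+$, uniformly asymptotically preserves convexity on $X$.
   Context: For $n\in\mathbb{N}_+$ and $f:[0,1]\to\mathbb{R}$, define $\widetilde{B}_n(f)(x):=\sum_{k=0}^n \left[f\left(\frac{k}{n}\right)\binom{n}{k}\right]x^k(1-x)^{n-k}$, where $[\alpha]$ is the largest integer $\le\alpha$, and $\widehat{B}_n(f)(x):=\sum_{k=0}^n \left\langle f\left(\frac{k}{n}\right)\binom{n}{k}\right\rangle x^k(1-x)^{n-k}$, where $\langle\alpha\rangle$ is the integer nearest to $\alpha$ (when $\alpha$ is a half-integer, $\langle\alpha\rangle$ may be either of the two neighbouring integers, chosen arbitrarily; the result holds for any such choice). Definition: a family of operators $L_n:X\to X$, $n\in\mathbb{N}_+$, on a class $X$ of functions defined on $I\subseteq\mathbb{R}$ uniformly asymptotically preserves convexity on $X$ if there exist $n_0\in\mathbb{N}_+$ and functions $\varepsilon_n,\eta_n:I\to\mathbb{R}$, $n\ge n_0$, such that: (i) $\varepsilon_n\to 0$ and $\eta_n\to 0$ uniformly on $I$ as $n\to\infty$; (ii) whenever $f\in X$ is convex on $I$, $L_n(f)+\varepsilon_n$ is convex on $I$ for all $n\ge n_0$; (iii) whenever $f\in X$ is concave on $I$, $L_n(f)+\eta_n$ is concave on $I$ for all $n\ge n_0$. *)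

From Stdlib Require Import Reals Lra Lia ZArith.
Open Scope R_scope.

(* largest integer <= x  (Int_part x = up x - 1, and x < up x <= x + 1) *)
Definition floorR (x : R) : R := IZR (Int_part x).

Definition nearest_int_choice (rnd : R -> Z) : Prop :=
  forall x : R, Rabs (x - IZR (rnd x)) <= 1 / 2.

Definition Bround (g : R -> R) (n : nat) (f : R -> R) (x : R) : R :=
  sum_f_R0 (fun k => g (f (INR k / INR n) * C n k) * x ^ k * (1 - x) ^ (n - k)) n.

Definition Btilde (n : nat) (f : R -> R) : R -> R := Bround floorR n f.

Definition Bhat (rnd : R -> Z) (n : nat) (f : R -> R) : R -> R :=
  Bround (fun a => IZR (rnd a)) n f.

Definition in01 (x : R) : Prop := 0 <= x <= 1.

Definition continuous_on01 (f : R -> R) : Prop :=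
  forall x, in01 x -> forall eps, 0 < eps ->
    exists delta, 0 < delta /\
      forall y, in01 y -> Rabs (y - x) < delta -> Rabs (f y - f x) < eps.

Definition is_integer (r : R) : Prop := exists z : Z, r = IZR z.

Definition classX (f : R -> R) : Prop :=
  continuous_on01 f /\ is_integer (f 0) /\ is_integer (f 1).

Definition convex_on01 (f : R -> R) : Prop :=
  forall x y t, in01 x -> in01 y -> 0 <= t <= 1 ->
    f (t * x + (1 - t) * y) <= t * f x + (1 - t) * f y.

Definition concave_on01 (f : R -> R) : Prop :=
  forall x y t, in01 x -> in01 y -> 0 <= t <= 1 ->
    t * f x + (1 - t) * f y <= f (t * x + (1 - t) * y).

Definition unif_cv_zero01 (e : nat -> R -> R) : Prop :=
  forall eps, 0 < eps -> exists N : nat,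
    forall n, (N <= n)%nat -> forall x, in01 x -> Rabs (e n x) < eps.

Definition unif_asymp_preserves_convexity (L : nat -> (R -> R) -> (R -> R)) : Prop :=
  (forall n f, (1 <= n)%nat -> classX f -> classX (L n f)) /\
  exists (n0 : nat) (eps eta : nat -> R -> R),
    (1 <= n0)%nat /\
    unif_cv_zero01 eps /\ unif_cv_zero01 eta /\
    (forall f, classX f -> convex_on01 f ->
       forall n, (n0 <= n)%nat -> convex_on01 (fun x => L n f x + eps n x)) /\
    (forall f, classX f -> concave_on01 f ->
       forall n, (n0 <= n)%nat -> concave_on01 (fun x => L n f x + eta n x)).

From Stdlib Require Import Reals Lra Lia.
Open Scope R_scope.

(** Rounding the coefficients [f(k/n) C(n,k)] to integers replaces the Bernstein
    coefficients [f(k/n)] by [f(k/n) - d_k] with [|d_k| <= 1/C(n,k)], and [d_0 = d_n = 0]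
    because [f(0)] and [f(1)] are integers.  Hence [|d_k| <= 1/n] for all [k], and
    [|d_k| <= 1/C(n,3)] for [3 <= k <= n-3].  The second derivative of a Bernstein
    polynomial is [n(n-1)] times the Bernstein polynomial of the second differences of
    its coefficients, so it is convex once these differences are nonnegative.  Adding the
    Bernstein polynomial of an explicit [O(1/n)] sequence whose second differences dominate
    those of [d] therefore restores convexity; concavity is the same argument for [-f]. *)

Lemma Rabs_le_inv a b : Rabs a <= b -> - b <= a <= b.
Proof.
  intros H. pose proof (Rle_abs a). pose proof (Rle_abs (- a)).
  rewrite Rabs_Ropp in *. lra.
Qed.

Lemma C_pos n k : 0 < C n k.
Proof.
  unfold C. apply Rdiv_lt_0_compat; [|apply Rmult_lt_0_compat];
    apply lt_0_INR, Factorial.lt_O_fact.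
Qed.

Lemma C_n_0 n : C n 0 = 1.
Proof. unfold C. rewrite Nat.sub_0_r. simpl. pose proof (INR_fact_neq_0 n). field; auto. Qed.

Lemma C_n_n n : C n n = 1.
Proof. unfold C. rewrite Nat.sub_diag. simpl. pose proof (INR_fact_neq_0 n). field; auto. Qed.

Lemma C_n_1 n : (1 <= n)%nat -> C n 1 = INR n.
Proof. intros. rewrite pascal_step3, C_n_0, Nat.sub_0_r by lia. simpl. field. Qed.

Lemma C_n_3 n : (3 <= n)%nat -> C n 3 = INR n * (INR n - 1) * (INR n - 2) / 6.
Proof.
  intros. rewrite !pascal_step3, C_n_0, Nat.sub_0_r, !minus_INR by lia. simpl. field.
Qed.

Lemma C_succ_mul_succ m i : (i <= m)%nat -> C (S m) (S i) * INR (S i) = INR (S m) * C m i.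
Proof.
  intros Hi. rewrite pascal_step3, pascal_step2 by lia.
  assert (INR (S m - i) <> 0) by (apply not_0_INR; lia).
  assert (INR (S i) <> 0) by (apply not_0_INR; lia).
  field; auto.
Qed.

Lemma C_succ_mul_sub m i : (i <= m)%nat -> C (S m) i * INR (S m - i) = INR (S m) * C m i.
Proof.
  intros Hi. rewrite pascal_step2 by lia.
  assert (INR (S m - i) <> 0) by (apply not_0_INR; lia).
  field; auto.
Qed.

Lemma C_le_C_half n a k : (a <= k)%nat -> (2 * k <= n)%nat -> C n a <= C n k.
Proof.
  induction k as [|k IH]; intros Hak Hkn.
  - replace a with 0%nat by lia. lra.
  - destruct (Nat.eq_dec a (S k)) as [->|Ha]; [lra|].
    rewrite pascal_step3 by lia.
    assert (INR (S k) <= INR (n - k)) by (apply le_INR; lia).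
    assert (0 < INR (S k)) by (apply lt_0_INR; lia).
    assert (1 <= INR (n - k) / INR (S k)).
    { apply (Rmult_le_reg_r (INR (S k))); [lra|]. unfold Rdiv.
      rewrite Rmult_assoc, Rinv_l; lra. }
    pose proof (IH ltac:(lia) ltac:(lia)). pose proof (C_pos n k). nra.
Qed.

Lemma C_le_C n a k : (a <= k)%nat -> (k + a <= n)%nat -> C n a <= C n k.
Proof.
  intros Hak Hkn. destruct (Nat.le_gt_cases (2 * k) n).
  - now apply C_le_C_half.
  - rewrite (pascal_step1 n k) by lia. apply C_le_C_half; lia.
Qed.

(** * Bernstein polynomials *)

Definition Bernstein (n : nat) (u : nat -> R) (x : R) : R :=
  sum_f_R0 (fun k => u k * C n k * x ^ k * (1 - x) ^ (n - k)) n.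

Definition fdiff (u : nat -> R) (j : nat) : R := u (S j) - u j.

Lemma Bernstein_ext n u v x :
  (forall k, (k <= n)%nat -> u k = v k) -> Bernstein n u x = Bernstein n v x.
Proof. intros H. apply sum_eq. intros k Hk. now rewrite H. Qed.

Lemma Bernstein_plus n u v x :
  Bernstein n (fun k => u k + v k) x = Bernstein n u x + Bernstein n v x.
Proof. unfold Bernstein. rewrite <- plus_sum. apply sum_eq. intros; ring. Qed.

Lemma Bernstein_opp n u x : Bernstein n (fun k => - u k) x = - Bernstein n u x.
Proof.
  unfold Bernstein.
  replace (- sum_f_R0 (fun k => u k * C n k * x ^ k * (1 - x) ^ (n - k)) n)
    with (-1 * sum_f_R0 (fun k => u k * C n k * x ^ k * (1 - x) ^ (n - k)) n) by ring.
  rewrite scal_sum. apply sum_eq. intros; ring.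
Qed.

Lemma Bernstein_at_0 n u : Bernstein n u 0 = u 0%nat.
Proof.
  unfold Bernstein. destruct n as [|m].
  - simpl. rewrite C_n_0. ring.
  - rewrite decomp_sum, sum_eq_R0 by (intros; simpl; ring || lia).
    rewrite C_n_0, Rminus_0_r, pow1. simpl. ring.
Qed.

Lemma Bernstein_at_1 n u : Bernstein n u 1 = u n.
Proof.
  unfold Bernstein. destruct n as [|m].
  - simpl. rewrite C_n_0. ring.
  - rewrite tech5, sum_eq_R0.
    + rewrite C_n_n, Nat.sub_diag, pow1. simpl. ring.
    + intros k Hk. replace (S m - k)%nat with (S (m - k)) by lia. simpl. ring.
Qed.

Lemma Bernstein_nonneg n u x :
  in01 x -> (forall k, (k <= n)%nat -> 0 <= u k) -> 0 <= Bernstein n u x.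
Proof.
  intros [Hx0 Hx1] Hu. unfold Bernstein.
  rewrite <- (sum_eq_R0 (fun _ => 0) n) by auto. apply sum_Rle. intros k Hk.
  pose proof (C_pos n k). pose proof (pow_le x k Hx0).
  pose proof (pow_le (1 - x) (n - k) ltac:(lra)). pose proof (Hu k Hk).
  apply Rmult_le_pos; [apply Rmult_le_pos; [apply Rmult_le_pos |] |]; lra.
Qed.

Lemma Rabs_Bernstein_le n u M x :
  in01 x -> (forall k, (k <= n)%nat -> Rabs (u k) <= M) -> Rabs (Bernstein n u x) <= M.
Proof.
  intros [Hx0 Hx1] Hu. unfold Bernstein.
  apply Rle_trans with (sum_f_R0 (fun k => C n k * x ^ k * (1 - x) ^ (n - k) * M) n).
  - eapply Rle_trans; [apply sum_f_R0_triangle | apply sum_Rle]. intros k Hk.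
    pose proof (C_pos n k). pose proof (pow_le x k Hx0).
    pose proof (pow_le (1 - x) (n - k) ltac:(lra)).
    rewrite !Rabs_mult, (Rabs_pos_eq (C n k)), (Rabs_pos_eq (x ^ k)),
      (Rabs_pos_eq ((1 - x) ^ (n - k))) by lra.
    pose proof (Hu k Hk).
    assert (0 <= C n k * x ^ k * (1 - x) ^ (n - k))
      by (apply Rmult_le_pos; [apply Rmult_le_pos |]; lra).
    nra.
  - rewrite <- scal_sum, <- binomial. replace (x + (1 - x)) with 1 by ring.
    rewrite pow1. lra.
Qed.

Lemma derivable_pt_lim_sum_f_R0 (F : nat -> R -> R) (F' : nat -> R) N x :
  (forall k, (k <= N)%nat -> derivable_pt_lim (F k) x (F' k)) ->
  derivable_pt_lim (fun y => sum_f_R0 (fun k => F k y) N) x (sum_f_R0 F' N).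
Proof.
  induction N as [|N IH]; intros HF; simpl.
  - apply HF; lia.
  - apply (derivable_pt_lim_plus (fun y => sum_f_R0 (fun k => F k y) N) (F (S N))).
    + apply IH. intros; apply HF; lia.
    + apply HF; lia.
Qed.

Lemma derivable_pt_lim_pow_mul_pow k p x :
  derivable_pt_lim (fun y => y ^ k * (1 - y) ^ p) x
    (INR k * x ^ pred k * (1 - x) ^ p - INR p * x ^ k * (1 - x) ^ pred p).
Proof.
  replace (INR k * x ^ pred k * (1 - x) ^ p - INR p * x ^ k * (1 - x) ^ pred p)
    with (INR k * x ^ pred k * (1 - x) ^ p + x ^ k * (INR p * (1 - x) ^ pred p * (0 - 1)))
    by ring.
  apply derivable_pt_lim_mult; [apply derivable_pt_lim_pow |].
  apply (derivable_pt_lim_comp (fun y => 1 - y) (fun y => y ^ p)).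
  - apply derivable_pt_lim_minus; [apply derivable_pt_lim_const | apply derivable_pt_lim_id].
  - apply derivable_pt_lim_pow.
Qed.

Lemma Bernstein_derivative_sum m u x :
  sum_f_R0 (fun k => u k * C (S m) k *
    (INR k * x ^ pred k * (1 - x) ^ (S m - k)
     - INR (S m - k) * x ^ k * (1 - x) ^ pred (S m - k))) (S m)
  = INR (S m) * Bernstein m (fdiff u) x.
Proof.
  set (A := fun k => u k * C (S m) k * INR k * x ^ pred k * (1 - x) ^ (S m - k)).
  set (B := fun k => u k * C (S m) k * INR (S m - k) * x ^ k * (1 - x) ^ pred (S m - k)).
  rewrite (sum_eq _ (fun k => A k - B k)) by (intros; unfold A, B; ring).
  rewrite minus_sum, decomp_sum, tech5 by lia. simpl pred.
  replace (A 0%nat) with 0 by (unfold A; simpl; ring).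
  replace (B (S m)) with 0 by (unfold B; rewrite Nat.sub_diag; simpl; ring).
  rewrite Rplus_0_l, Rplus_0_r, <- minus_sum.
  unfold Bernstein, fdiff. rewrite scal_sum. apply sum_eq. intros i Hi. unfold A, B.
  pose proof (C_succ_mul_succ m i Hi) as E1. pose proof (C_succ_mul_sub m i Hi) as E2.
  replace (pred (S m - i)) with (m - i)%nat by lia. simpl pred. simpl (S m - S i)%nat.
  transitivity ((C (S m) (S i) * INR (S i)) * u (S i) * x ^ i * (1 - x) ^ (m - i)
    - (C (S m) i * INR (S m - i)) * u i * x ^ i * (1 - x) ^ (m - i)); [ring |].
  rewrite E1, E2. ring.
Qed.

Lemma derivable_pt_lim_Bernstein n u x :
  derivable_pt_lim (Bernstein n u) x (INR n * Bernstein (pred n) (fdiff u) x).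
Proof.
  destruct n as [|m].
  - simpl INR. rewrite Rmult_0_l.
    apply (derivable_pt_lim_ext (fun _ => u 0%nat * C 0 0)).
    + intros y. unfold Bernstein. simpl. ring.
    + apply derivable_pt_lim_const.
  - simpl pred. rewrite <- Bernstein_derivative_sum.
    apply (derivable_pt_lim_ext
      (fun y => sum_f_R0 (fun k => u k * C (S m) k * (y ^ k * (1 - y) ^ (S m - k))) (S m))).
    + intros y. apply sum_eq. intros; ring.
    + apply derivable_pt_lim_sum_f_R0. intros k _.
      apply derivable_pt_lim_scal, derivable_pt_lim_pow_mul_pow.
Qed.

Lemma convex_on01_ext f h : (forall x, f x = h x) -> convex_on01 h -> convex_on01 f.
Proof. intros E Ch x y t Hx Hy Ht. rewrite !E. now apply Ch. Qed.

Lemma concave_on01_opp f : concave_on01 f -> convex_on01 (fun x => - f x).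
Proof. intros Cf x y t Hx Hy Ht. pose proof (Cf x y t Hx Hy Ht). lra. Qed.

Lemma concave_on01_of_convex_opp f : convex_on01 (fun x => - f x) -> concave_on01 f.
Proof. intros Cf x y t Hx Hy Ht. pose proof (Cf x y t Hx Hy Ht). lra. Qed.

Lemma convex_on01_of_derive_nondecreasing g g' :
  (forall x, derivable_pt_lim g x (g' x)) ->
  (forall a b, 0 <= a -> a < b -> b <= 1 -> g' a <= g' b) ->
  convex_on01 g.
Proof.
  intros Hg Hmono.
  assert (Hlt : forall x y t, 0 <= x -> x < y -> y <= 1 -> 0 < t < 1 ->
            g (t * x + (1 - t) * y) <= t * g x + (1 - t) * g y).
  { intros x y t Hx Hxy Hy Ht. set (z := t * x + (1 - t) * y).
    assert (x < z < y) by (unfold z; nra).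
    destruct (MVT_cor2 g g' x z) as [c1 [E1 Hc1]]; [lra | intros; apply Hg |].
    destruct (MVT_cor2 g g' z y) as [c2 [E2 Hc2]]; [lra | intros; apply Hg |].
    assert (Hslope : t * ((1 - t) * (y - x)) * g' c1 <= t * ((1 - t) * (y - x)) * g' c2).
    { apply Rmult_le_compat_l; [apply Rmult_le_pos; nra | apply Hmono; lra]. }
    assert (t * (g z - g x) = t * ((1 - t) * (y - x)) * g' c1) by (rewrite E1; unfold z; ring).
    assert ((1 - t) * (g y - g z) = t * ((1 - t) * (y - x)) * g' c2)
      by (rewrite E2; unfold z; ring).
    lra. }
  intros x y t [Hx0 Hx1] [Hy0 Hy1] Ht.
  destruct (Req_dec t 0) as [->|Ht0].
  { replace (0 * x + (1 - 0) * y) with y by ring. lra. }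
  destruct (Req_dec t 1) as [->|Ht1].
  { replace (1 * x + (1 - 1) * y) with x by ring. lra. }
  destruct (Rtotal_order x y) as [Hxy|[<-|Hxy]].
  - apply Hlt; lra.
  - replace (t * x + (1 - t) * x) with x by ring. lra.
  - replace (t * x + (1 - t) * y) with ((1 - t) * y + (1 - (1 - t)) * x) by ring.
    pose proof (Hlt y x (1 - t) Hy0 Hxy Hx1 ltac:(lra)). lra.
Qed.

Lemma convex_on01_of_derive2_nonneg g g' g'' :
  (forall x, derivable_pt_lim g x (g' x)) ->
  (forall x, derivable_pt_lim g' x (g'' x)) ->
  (forall x, in01 x -> 0 <= g'' x) ->
  convex_on01 g.
Proof.
  intros Hg Hg' Hpos. apply (convex_on01_of_derive_nondecreasing g g' Hg).
  intros a b Ha Hab Hb.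
  destruct (MVT_cor2 g' g'' a b Hab) as [c [E Hc]]; [intros; apply Hg' |].
  assert (0 <= g'' c) by (apply Hpos; unfold in01; lra). nra.
Qed.

Lemma Bernstein_convex n u :
  (forall j, (j + 2 <= n)%nat -> 0 <= fdiff (fdiff u) j) -> convex_on01 (Bernstein n u).
Proof.
  intros Hu.
  apply (convex_on01_of_derive2_nonneg _ (fun x => INR n * Bernstein (pred n) (fdiff u) x)
           (fun x => INR n * (INR (pred n) * Bernstein (pred (pred n)) (fdiff (fdiff u)) x))).
  - intros x. apply derivable_pt_lim_Bernstein.
  - intros x. apply (derivable_pt_lim_scal (Bernstein (pred n) (fdiff u))).
    apply derivable_pt_lim_Bernstein.
  - intros x Hx. destruct n as [|[|m]]; [simpl; lra | simpl; lra | simpl pred].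
    apply Rmult_le_pos; [apply pos_INR|]. apply Rmult_le_pos; [apply pos_INR|].
    apply Bernstein_nonneg; [exact Hx |]. intros j Hj. apply Hu. lia.
Qed.

Lemma continuous_on01_ext f h : (forall x, f x = h x) -> continuous_on01 h -> continuous_on01 f.
Proof.
  intros E Ch x Hx e He. destruct (Ch x Hx e He) as [d [Hd Hdh]].
  exists d. split; [exact Hd |]. intros. rewrite !E. auto.
Qed.

Lemma continuous_on01_of_continuity_pt f : (forall x, continuity_pt f x) -> continuous_on01 f.
Proof.
  intros Hf x _ e He. destruct (Hf x e He) as [d [Hd Hfd]]. exists d. split; [exact Hd |].
  intros y _ Hy. destruct (Req_dec y x) as [->|Hyx].
  - rewrite Rminus_diag, Rabs_R0. exact He.
  - apply Hfd. split; [split; [exact I | auto] | exact Hy].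
Qed.

Lemma continuous_on01_Bernstein n u : continuous_on01 (Bernstein n u).
Proof.
  apply continuous_on01_of_continuity_pt. intros x. apply derivable_continuous_pt.
  eexists. apply derivable_pt_lim_Bernstein.
Qed.

Lemma in01_INR_div k n : (k <= n)%nat -> (1 <= n)%nat -> in01 (INR k / INR n).
Proof.
  intros Hkn Hn. assert (0 < INR n) by (apply lt_0_INR; lia).
  assert (INR k <= INR n) by (apply le_INR; lia). pose proof (pos_INR k).
  split.
  - apply Rmult_le_pos; [lra | left; apply Rinv_0_lt_compat; lra].
  - apply (Rmult_le_reg_r (INR n)); [lra |]. unfold Rdiv.
    rewrite Rmult_assoc, Rinv_l; lra.
Qed.

Lemma convex_on01_fdiff2_nonneg f n j : convex_on01 f -> (j + 2 <= n)%nat ->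
  0 <= fdiff (fdiff (fun k => f (INR k / INR n))) j.
Proof.
  intros Cf Hj. unfold fdiff.
  pose proof (Cf (INR j / INR n) (INR (S (S j)) / INR n) (1 / 2)
    (in01_INR_div j n ltac:(lia) ltac:(lia)) (in01_INR_div (S (S j)) n ltac:(lia) ltac:(lia))
    ltac:(lra)) as Hmid.
  replace (1 / 2 * (INR j / INR n) + (1 - 1 / 2) * (INR (S (S j)) / INR n))
    with (INR (S j) / INR n) in Hmid.
  - lra.
  - assert (INR n <> 0) by (apply not_0_INR; lia). rewrite !S_INR. field. auto.
Qed.

(** * The convexity correction *)

(* The quadratic part has second differences [4/C(n,3)], which beat those of any
   sequence bounded by [1/C(n,3)]; the geometric parts contribute at least [4/n] to every
   second difference involving one of the indices [0, 1, 2, n-2, n-1, n], where only the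
   bound [1/n] is available. *)
Definition corrector_coef (n k : nat) : R :=
  2 / C n 3 * INR k * (INR k - INR n) + 64 / INR n * ((1 / 2) ^ k + (1 / 2) ^ (n - k)).

Definition corrector (n : nat) (x : R) : R := Bernstein n (corrector_coef n) x.

Lemma fdiff2_corrector_coef n j : (j + 2 <= n)%nat ->
  fdiff (fdiff (corrector_coef n)) j
  = 4 / C n 3 + 16 / INR n * ((1 / 2) ^ j + (1 / 2) ^ (n - 2 - j)).
Proof.
  intros Hj. unfold fdiff, corrector_coef.
  replace (n - j)%nat with (S (S (n - 2 - j))) by lia.
  replace (n - S j)%nat with (S (n - 2 - j)) by lia.
  replace (n - S (S j))%nat with (n - 2 - j)%nat by lia.
  assert (INR n <> 0) by (apply not_0_INR; lia).
  pose proof (C_pos n 3).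
  rewrite !S_INR. simpl pow. field. lra.
Qed.

Lemma fdiff2_le_corrector_coef n d j :
  (forall k, (k <= n)%nat -> Rabs (d k) <= / INR n) ->
  (forall k, (3 <= k)%nat -> (k + 3 <= n)%nat -> Rabs (d k) <= / C n 3) ->
  (j + 2 <= n)%nat ->
  fdiff (fdiff d) j <= fdiff (fdiff (corrector_coef n)) j.
Proof.
  intros Hd Hd3 Hj. rewrite fdiff2_corrector_coef by exact Hj. unfold fdiff.
  assert (0 < / INR n) by (apply Rinv_0_lt_compat, lt_0_INR; lia).
  pose proof (Rinv_0_lt_compat _ (C_pos n 3)).
  pose proof (pow_le (1 / 2) j ltac:(lra)). pose proof (pow_le (1 / 2) (n - 2 - j) ltac:(lra)).
  assert (Hquarter : forall m, (m <= 2)%nat -> 1 / 4 <= (1 / 2) ^ m)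
    by (intros [|[|[|m]]] Hm; simpl; lra || lia).
  assert (Hend : (j <= 2)%nat \/ (n - 2 - j <= 2)%nat ->
            4 / C n 3 + 16 / INR n * ((1 / 2) ^ j + (1 / 2) ^ (n - 2 - j)) >= 4 / INR n).
  { intros [Hj2|Hj2]; pose proof (Hquarter _ Hj2); unfold Rdiv in *; nra. }
  destruct (Nat.le_gt_cases j 2) as [Hj2|Hj2];
    [| destruct (Nat.le_gt_cases (n - 2 - j) 2) as [Hj2'|Hj2']].
  1, 2: pose proof (Rabs_le_inv _ _ (Hd j ltac:(lia)));
    pose proof (Rabs_le_inv _ _ (Hd (S j) ltac:(lia)));
    pose proof (Rabs_le_inv _ _ (Hd (S (S j)) ltac:(lia)));
    specialize (Hend ltac:(lia)); unfold Rdiv in *; lra.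
  pose proof (Rabs_le_inv _ _ (Hd3 j ltac:(lia) ltac:(lia))).
  pose proof (Rabs_le_inv _ _ (Hd3 (S j) ltac:(lia) ltac:(lia))).
  pose proof (Rabs_le_inv _ _ (Hd3 (S (S j)) ltac:(lia) ltac:(lia))).
  assert (0 <= 16 / INR n * ((1 / 2) ^ j + (1 / 2) ^ (n - 2 - j)))
    by (unfold Rdiv; apply Rmult_le_pos; lra).
  unfold Rdiv in *. lra.
Qed.

Lemma Rabs_corrector_coef_le n k : (4 <= n)%nat -> (k <= n)%nat ->
  Rabs (corrector_coef n k) <= 128 / INR n.
Proof.
  intros Hn Hk. unfold corrector_coef.
  assert (HN : 4 <= INR n) by (replace 4 with (INR 4) by (simpl; ring); apply le_INR; lia).
  assert (HK : 0 <= INR k <= INR n) by (split; [apply pos_INR | apply le_INR; lia]).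
  pose proof (C_pos n 3).
  assert (Hc : 2 / C n 3 * (INR n * INR n / 4) <= 12 / INR n).
  { rewrite C_n_3 by lia.
    apply (Rmult_le_reg_r (INR n * (INR n - 1) * (INR n - 2))); [nra |].
    replace (2 / (INR n * (INR n - 1) * (INR n - 2) / 6) * (INR n * INR n / 4)
               * (INR n * (INR n - 1) * (INR n - 2))) with (3 * INR n * INR n)
      by (field; repeat split; lra).
    replace (12 / INR n * (INR n * (INR n - 1) * (INR n - 2)))
      with (12 * (INR n - 1) * (INR n - 2)) by (field; lra).
    nra. }
  assert (Hquad : 0 <= 2 / C n 3 * (INR k * (INR n - INR k))
                   <= 2 / C n 3 * (INR n * INR n / 4)).
  { assert (0 <= 2 / C n 3)
      by (unfold Rdiv; apply Rmult_le_pos; [lra | left; apply Rinv_0_lt_compat; lra]).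
    pose proof (Rle_0_sqr (INR n - 2 * INR k)). unfold Rsqr in *.
    split; [apply Rmult_le_pos; nra | apply Rmult_le_compat_l; nra]. }
  assert (Hhalf : forall m, 0 <= (1 / 2) ^ m <= 1)
    by (intros m; induction m; simpl; lra).
  pose proof (Hhalf k). pose proof (Hhalf (n - k)%nat).
  assert (Hgeom : 0 <= 64 / INR n * ((1 / 2) ^ k + (1 / 2) ^ (n - k)) <= 128 / INR n).
  { unfold Rdiv. assert (0 < / INR n) by (apply Rinv_0_lt_compat; lra). nra. }
  assert (12 / INR n <= 128 / INR n)
    by (unfold Rdiv; apply Rmult_le_compat_r; [left; apply Rinv_0_lt_compat |]; lra).
  apply Rabs_le.
  replace (2 / C n 3 * INR k * (INR k - INR n))
    with (- (2 / C n 3 * (INR k * (INR n - INR k)))) by ring.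
  lra.
Qed.

Lemma unif_cv_zero01_corrector : unif_cv_zero01 corrector.
Proof.
  intros e He. destruct (archimed_cor1 (e / 128)) as [N [HN HN0]]; [lra |].
  exists (Nat.max N 4). intros n Hn x Hx.
  apply Rle_lt_trans with (128 / INR n).
  - apply Rabs_Bernstein_le; [exact Hx |]. intros k Hk. apply Rabs_corrector_coef_le; lia.
  - assert (INR N <= INR n) by (apply le_INR; lia).
    assert (0 < INR N) by (apply lt_0_INR; lia).
    assert (/ INR n <= / INR N) by (apply Rinv_le_contravar; lra).
    unfold Rdiv in *. lra.
Qed.

Lemma unif_cv_zero01_opp e : unif_cv_zero01 e -> unif_cv_zero01 (fun n x => - e n x).
Proof.
  intros He eps Heps. destruct (He eps Heps) as [N HN]. exists N.
  intros n Hn x Hx. rewrite Rabs_Ropp. now apply HN.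
Qed.

Lemma Bernstein_corrected_convex n s d :
  (forall j, (j + 2 <= n)%nat -> 0 <= fdiff (fdiff s) j) ->
  (forall k, (k <= n)%nat -> Rabs (d k) <= / INR n) ->
  (forall k, (3 <= k)%nat -> (k + 3 <= n)%nat -> Rabs (d k) <= / C n 3) ->
  convex_on01 (fun x => Bernstein n (fun k => s k - d k) x + corrector n x).
Proof.
  intros Hs Hd Hd3.
  apply (convex_on01_ext _ (Bernstein n (fun k => s k - d k + corrector_coef n k))).
  { intros x. now rewrite Bernstein_plus. }
  apply Bernstein_convex. intros j Hj.
  pose proof (Hs j Hj). pose proof (fdiff2_le_corrector_coef n d j Hd Hd3 Hj).
  unfold fdiff in *. lra.
Qed.

(** * Bernstein operators with rounded coefficients *)

Section Rounding.

Variable g : R -> R.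
Hypothesis g_close : forall z, Rabs (z - g z) <= 1.
Hypothesis g_integer : forall z, is_integer z -> g z = z.

Definition rounding_error (n : nat) (f : R -> R) (k : nat) : R :=
  (f (INR k / INR n) * C n k - g (f (INR k / INR n) * C n k)) / C n k.

Lemma Bround_Bernstein n f x :
  Bround g n f x = Bernstein n (fun k => f (INR k / INR n) - rounding_error n f k) x.
Proof.
  unfold Bround, Bernstein, rounding_error. apply sum_eq. intros k _.
  pose proof (C_pos n k). field. lra.
Qed.

Lemma Rabs_rounding_error_le n f k : Rabs (rounding_error n f k) <= / C n k.
Proof.
  unfold rounding_error, Rdiv. pose proof (C_pos n k).
  rewrite Rabs_mult, (Rabs_pos_eq (/ C n k)) by (left; apply Rinv_0_lt_compat; lra).
  pose proof (g_close (f (INR k / INR n) * C n k)).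
  pose proof (Rinv_0_lt_compat _ (C_pos n k)). nra.
Qed.

Lemma rounding_error_0 n f : is_integer (f 0) -> rounding_error n f 0 = 0.
Proof.
  intros H0. unfold rounding_error. rewrite C_n_0.
  replace (INR 0 / INR n) with 0 by (simpl; unfold Rdiv; ring).
  rewrite Rmult_1_r, g_integer by exact H0. unfold Rdiv. ring.
Qed.

Lemma rounding_error_n n f : (1 <= n)%nat -> is_integer (f 1) -> rounding_error n f n = 0.
Proof.
  intros Hn H1. unfold rounding_error. rewrite C_n_n.
  replace (INR n / INR n) with 1 by (field; apply not_0_INR; lia).
  rewrite Rmult_1_r, g_integer by exact H1. unfold Rdiv. ring.
Qed.

Lemma Rabs_rounding_error_le_inv_n n f k :
  is_integer (f 0) -> is_integer (f 1) -> (1 <= n)%nat -> (k <= n)%nat ->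
  Rabs (rounding_error n f k) <= / INR n.
Proof.
  intros H0 H1 Hn Hk. pose proof (Rinv_0_lt_compat _ (lt_0_INR n ltac:(lia))).
  destruct (Nat.eq_dec k 0) as [->|Hk0].
  { rewrite rounding_error_0, Rabs_R0 by exact H0. lra. }
  destruct (Nat.eq_dec k n) as [->|Hkn].
  { rewrite rounding_error_n, Rabs_R0 by assumption. lra. }
  eapply Rle_trans; [apply Rabs_rounding_error_le |].
  rewrite <- C_n_1 by lia. apply Rinv_le_contravar; [apply C_pos | apply C_le_C; lia].
Qed.

Lemma Rabs_rounding_error_le_inv_C3 n f k : (3 <= k)%nat -> (k + 3 <= n)%nat ->
  Rabs (rounding_error n f k) <= / C n 3.
Proof.
  intros Hk3 Hkn. eapply Rle_trans; [apply Rabs_rounding_error_le |].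
  apply Rinv_le_contravar; [apply C_pos | apply C_le_C; lia].
Qed.

Lemma Bround_classX n f : (1 <= n)%nat -> classX f -> classX (Bround g n f).
Proof.
  intros Hn [_ [H0 H1]]. split; [| split].
  - apply (continuous_on01_ext _ _ (Bround_Bernstein n f)), continuous_on01_Bernstein.
  - rewrite Bround_Bernstein, Bernstein_at_0, rounding_error_0 by exact H0.
    replace (INR 0 / INR n) with 0 by (simpl; unfold Rdiv; ring).
    now rewrite Rminus_0_r.
  - rewrite Bround_Bernstein, Bernstein_at_1, rounding_error_n by assumption.
    replace (INR n / INR n) with 1 by (field; apply not_0_INR; lia).
    now rewrite Rminus_0_r.
Qed.

Lemma Bround_unif_asymp_preserves_convexity : unif_asymp_preserves_convexity (Bround g).
Proof.
  split; [exact Bround_classX |].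
  exists 4%nat, corrector, (fun n x => - corrector n x).
  split; [lia |]. split; [exact unif_cv_zero01_corrector |].
  split; [exact (unif_cv_zero01_opp _ unif_cv_zero01_corrector) |].
  split.
  - intros f [_ [H0 H1]] Cf n Hn.
    apply (convex_on01_ext _ (fun x => Bernstein n
             (fun k => f (INR k / INR n) - rounding_error n f k) x + corrector n x)).
    { intros x. now rewrite Bround_Bernstein. }
    apply Bernstein_corrected_convex.
    + intros j Hj. now apply convex_on01_fdiff2_nonneg.
    + intros k Hk. apply Rabs_rounding_error_le_inv_n; auto; lia.
    + intros k Hk3 Hkn. now apply Rabs_rounding_error_le_inv_C3.
  - intros f [_ [H0 H1]] Cf n Hn. apply concave_on01_of_convex_opp.
    apply (convex_on01_ext _ (fun x => Bernstein n
             (fun k => - f (INR k / INR n) - - rounding_error n f k) x + corrector n x)).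
    { intros x. rewrite Bround_Bernstein, Ropp_plus_distr, Ropp_involutive, <- Bernstein_opp.
      f_equal. apply Bernstein_ext. intros; ring. }
    apply Bernstein_corrected_convex.
    + intros j Hj. exact (convex_on01_fdiff2_nonneg _ n j (concave_on01_opp f Cf) Hj).
    + intros k Hk. rewrite Rabs_Ropp. apply Rabs_rounding_error_le_inv_n; auto; lia.
    + intros k Hk3 Hkn. rewrite Rabs_Ropp. now apply Rabs_rounding_error_le_inv_C3.
Qed.

End Rounding.

Lemma Rabs_sub_floorR_le z : Rabs (z - floorR z) <= 1.
Proof. unfold floorR. destruct (base_Int_part z). apply Rabs_le. lra. Qed.

Lemma floorR_integer z : is_integer z -> floorR z = z.
Proof. intros [m ->]. unfold floorR. rewrite <- (Int_part_spec (IZR m) m) by lra. reflexivity. Qed.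

Lemma nearest_int_choice_close rnd :
  nearest_int_choice rnd -> forall z, Rabs (z - IZR (rnd z)) <= 1.
Proof. intros Hrnd z. pose proof (Hrnd z). lra. Qed.

Lemma nearest_int_choice_integer rnd :
  nearest_int_choice rnd -> forall z, is_integer z -> IZR (rnd z) = z.
Proof.
  intros Hrnd z [m ->]. pose proof (Rabs_le_inv _ _ (Hrnd (IZR m))) as Hm.
  rewrite <- minus_IZR in Hm.
  assert (IZR (-1) < IZR (m - rnd (IZR m)) < IZR 1) as [Hlo Hhi] by (simpl; lra).
  apply lt_IZR in Hlo, Hhi. f_equal. lia.
Qed.

Theorem theorem1p6 :
  unif_asymp_preserves_convexity Btilde /\
  (forall rnd : R -> Z, nearest_int_choice rnd ->
     unif_asymp_preserves_convexity (Bhat rnd)).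
Proof.
  split.
  - exact (Bround_unif_asymp_preserves_convexity floorR Rabs_sub_floorR_le floorR_integer).
  - intros rnd Hrnd.
    exact (Bround_unif_asymp_preserves_convexity (fun a => IZR (rnd a))
             (nearest_int_choice_close rnd Hrnd) (nearest_int_choice_integer rnd Hrnd)).
Qed.
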